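(* Let $A$ be an MV-algebra, let $\operatorname{PDer}(A)=\{d_a: a\in A\}$ where $d_a(x)=a\odot x$, and let $\operatorname{IDer}(A)$ be the set of isotone $(\odot,\vee)$-derivations $d$ on $A$ with $d(1)\in\mathbf{B}(A)$. Then both sets are closed under pointwise $\vee$ and $\wedge$, and (1) $\operatorname{PDer}(A)$ is a lattice isomorphic to the lattice $(A,\vee,\wedge)$ via $d_a\mapsto a$; (2) $\operatorname{IDer}(A)$ is a lattice isomorphic to the lattice $(\mathbf{B}(A),\vee,\wedge)$ via $d\mapsto d(1)$.
   Context: An MV-algebra is an algebra $(A,\oplus,{}^*,0)$ of type $(2,1,0)$ satisfying: $x\oplus(y\oplus z)=(x\oplus y)\oplus z$, $x\oplus y=y\oplus x$, $x\oplus 0=x$, $x^{**}=x$, $x\oplus 0^*=0^*$, $(x^*\oplus y)^*\oplus y=(y^*\oplus x)^*\oplus x$. Put $1=0^*$ and $x\odot y=(x^*\oplus y^* )^*$. The natural order is $x\le y$ iff $x^*\oplus y=1$, with lattice operations $x\vee y=(x\odot y^* )\oplus y$, $x\wedge y=x\odot(x^*\oplus y)$. The Boolean center is $\mathbf{B}(A)=\{x\in A: x\oplus x=x\}$. A $(\odot,\vee)$-derivation on $A$ is a map $d:A\to A$ with $d(x\odot y)=(d(x)\odot y)\vee(x\odot d(y))$ for all $x,y\in A$; it is isotone if $x\le y$ implies $d(x)\le d(y)$. Maps $A\to A$ are ordered and combined pointwise. *)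

Set Implicit Arguments.

Record MVAlgebra := {
  mv_car :> Type;
  mv_oplus : mv_car -> mv_car -> mv_car;
  mv_star : mv_car -> mv_car;
  mv_zero : mv_car;
  mv_assoc : forall x y z, mv_oplus x (mv_oplus y z) = mv_oplus (mv_oplus x y) z;
  mv_comm : forall x y, mv_oplus x y = mv_oplus y x;
  mv_zero_r : forall x, mv_oplus x mv_zero = x;
  mv_invol : forall x, mv_star (mv_star x) = x;
  mv_one_abs : forall x, mv_oplus x (mv_star mv_zero) = mv_star mv_zero;
  mv_luk : forall x y,
    mv_oplus (mv_star (mv_oplus (mv_star x) y)) y =
    mv_oplus (mv_star (mv_oplus (mv_star y) x)) x
}.

Section MVOps.
Variable A : MVAlgebra.

Definition mv_one : A := mv_star A (mv_zero A).
Definition mv_odot (x y : A) : A :=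
  mv_star A (mv_oplus A (mv_star A x) (mv_star A y)).
Definition mv_le (x y : A) : Prop := mv_oplus A (mv_star A x) y = mv_one.
Definition mv_join (x y : A) : A := mv_oplus A (mv_odot x (mv_star A y)) y.
Definition mv_meet (x y : A) : A := mv_odot x (mv_oplus A (mv_star A x) y).
Definition boolean_center (x : A) : Prop := mv_oplus A x x = x.

Definition odot_join_derivation (d : A -> A) : Prop :=
  forall x y, d (mv_odot x y) = mv_join (mv_odot (d x) y) (mv_odot x (d y)).
Definition isotone (d : A -> A) : Prop :=
  forall x y, mv_le x y -> mv_le (d x) (d y).

Definition principal_der (a : A) : A -> A := fun x => mv_odot a x.
Definition PDer (d : A -> A) : Prop := exists a : A, d = principal_der a.
Definition IDer (d : A -> A) : Prop :=
  odot_join_derivation d /\ isotone d /\ boolean_center (d mv_one).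

Definition fjoin (d1 d2 : A -> A) : A -> A := fun x => mv_join (d1 x) (d2 x).
Definition fmeet (d1 d2 : A -> A) : A -> A := fun x => mv_meet (d1 x) (d2 x).
End MVOps.
Arguments mv_one {A}.
Arguments PDer {A}. Arguments IDer {A}. Arguments fjoin {A}. Arguments fmeet {A}.
Arguments principal_der {A}. Arguments mv_join {A}. Arguments mv_meet {A}.
Arguments boolean_center {A}. Arguments mv_odot {A}. Arguments mv_le {A}.
Arguments odot_join_derivation {A}. Arguments isotone {A}.

(* Everything rests on two distributive laws of the product:
   x (.) (y v z) = (x (.) y) v (x (.) z)  and  x (.) (y ^ z) = (x (.) y) ^ (x (.) z).
   The first follows from residuation (x (.) y <= z iff x <= y^* (+) z); the
   second additionally uses prelinearity (x^* (+) y) v (y^* (+) x) = 1.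
   (1) The distributive laws say exactly that a |-> d_a turns join and meet
       of A into the pointwise join and meet of maps; d_a 1 = a recovers a.
   (2) A derivation satisfies d 0 = 0, d x <= x and x (.) d 1 <= d x; if it is
       moreover isotone with d 1 Boolean, then d x = x ^ d 1 = x (.) d 1, i.e.
       every d in IDer(A) is the principal derivation d_(d 1).  Conversely
       d_b is in IDer(A) for every Boolean b.  Hence IDer(A) consists of the
       d_b with b in B(A), and (2) follows from (1) and the closure of B(A)
       under join and meet. *)

From Stdlib Require Import FunctionalExtensionality Setoid.

Notation "x ⊕ y" := (mv_oplus _ x y) (at level 50, left associativity).
Notation "x ⊙ y" := (mv_odot x y) (at level 40, left associativity).
Notation "x ^*" := (mv_star _ x) (at level 30).
Notation "x ≤ y" := (mv_le x y) (at level 70).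
Notation "x ⊔ y" := (mv_join x y) (at level 50).
Notation "x ⊓ y" := (mv_meet x y) (at level 40).

Section MVArithmetic.
Context {A : MVAlgebra}.
Implicit Types x y z : A.

Lemma oplusC x y : x ⊕ y = y ⊕ x.
Proof. apply mv_comm. Qed.
Lemma oplusA x y z : x ⊕ (y ⊕ z) = x ⊕ y ⊕ z.
Proof. apply mv_assoc. Qed.
Lemma stK x : x ^* ^* = x.
Proof. apply mv_invol. Qed.
Lemma oplus1 x : x ⊕ mv_one = mv_one.
Proof. apply mv_one_abs. Qed.

Lemma zero_oplus x : mv_zero A ⊕ x = x.
Proof. rewrite oplusC; apply mv_zero_r. Qed.
Lemma one_oplus x : mv_one ⊕ x = mv_one.
Proof. rewrite oplusC; apply oplus1. Qed.
Lemma st1 : (@mv_one A) ^* = mv_zero A.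
Proof. apply stK. Qed.
Lemma st_inj x y : x ^* = y ^* -> x = y.
Proof. intro H. rewrite <- (stK x), <- (stK y), H; reflexivity. Qed.

(* Every element is complemented for (+): instance y = 1 of the Łukasiewicz axiom. *)
Lemma compl_l x : x ^* ⊕ x = mv_one.
Proof.
  pose proof (mv_luk A x mv_one) as H. unfold mv_one in *.
  rewrite mv_one_abs, stK, zero_oplus in H. symmetry; exact H.
Qed.

Lemma st_odot x y : (x ⊙ y)^* = x^* ⊕ y^*.
Proof. apply stK. Qed.
Lemma st_oplus x y : (x ⊕ y)^* = x^* ⊙ y^*.
Proof. unfold mv_odot; rewrite !stK; reflexivity. Qed.

Lemma odotC x y : x ⊙ y = y ⊙ x.
Proof. unfold mv_odot; rewrite oplusC; reflexivity. Qed.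
Lemma odotA x y z : x ⊙ (y ⊙ z) = x ⊙ y ⊙ z.
Proof. unfold mv_odot; rewrite !stK, oplusA; reflexivity. Qed.
Lemma odot1 x : x ⊙ mv_one = x.
Proof. unfold mv_odot. rewrite st1, mv_zero_r, stK; reflexivity. Qed.
Lemma odot0 x : x ⊙ mv_zero A = mv_zero A.
Proof. unfold mv_odot. rewrite oplus1, st1; reflexivity. Qed.
Lemma zero_odot x : mv_zero A ⊙ x = mv_zero A.
Proof. rewrite odotC; apply odot0. Qed.
Lemma odot_compl x : x ⊙ x ^* = mv_zero A.
Proof. unfold mv_odot. rewrite stK, compl_l, st1; reflexivity. Qed.

End MVArithmetic.

Section NaturalOrder.
Context {A : MVAlgebra}.
Implicit Types x y z : A.

(* The Łukasiewicz axiom says precisely that the join is commutative. *)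
Lemma joinC x y : x ⊔ y = y ⊔ x.
Proof. unfold mv_join, mv_odot. rewrite !stK. apply mv_luk. Qed.

Lemma le_refl x : x ≤ x.
Proof. apply compl_l. Qed.

Lemma le_iff0 x y : x ≤ y <-> x ⊙ y^* = mv_zero A.
Proof.
  unfold mv_le, mv_odot. rewrite stK. split; intro H.
  - rewrite H; apply st1.
  - apply st_inj. rewrite H, st1; reflexivity.
Qed.

Lemma join_le x y : x ≤ y -> x ⊔ y = y.
Proof. intro H. apply le_iff0 in H. unfold mv_join. rewrite H. apply zero_oplus. Qed.

Lemma join_idem x : x ⊔ x = x.
Proof. apply join_le, le_refl. Qed.

Lemma le_antisym x y : x ≤ y -> y ≤ x -> x = y.
Proof.
  intros H1 H2. rewrite <- (join_le _ _ H1), joinC. symmetry. apply join_le; exact H2.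
Qed.

Lemma le_ex x y : x ≤ y -> y = x ⊕ (y ⊙ x^*).
Proof.
  intro H. rewrite <- (join_le _ _ H) at 1. rewrite joinC. apply oplusC.
Qed.

Lemma le_add x z : x ≤ x ⊕ z.
Proof. unfold mv_le. rewrite oplusA, compl_l. apply one_oplus. Qed.

Lemma le_trans x y z : x ≤ y -> y ≤ z -> x ≤ z.
Proof.
  intros H1 H2. rewrite (le_ex _ _ H2), (le_ex _ _ H1), <- oplusA. apply le_add.
Qed.

Lemma le_star x y : x ≤ y -> y^* ≤ x^*.
Proof. unfold mv_le. rewrite stK, oplusC. auto. Qed.
Lemma le_star_inv x y : y^* ≤ x^* -> x ≤ y.
Proof. intro H. apply le_star in H. rewrite !stK in H. exact H. Qed.

Lemma oplus_mono x y z : x ≤ y -> x ⊕ z ≤ y ⊕ z.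
Proof.
  intro H. rewrite (le_ex _ _ H), <- oplusA, (oplusC (y ⊙ x^*) z), oplusA.
  apply le_add.
Qed.
Lemma odot_mono x y z : x ≤ y -> x ⊙ z ≤ y ⊙ z.
Proof. intro H. apply le_star, oplus_mono, le_star, H. Qed.
Lemma odot_mono_r x y z : x ≤ y -> z ⊙ x ≤ z ⊙ y.
Proof. intro H. rewrite !(odotC z). apply odot_mono; exact H. Qed.

Lemma le_one x : x ≤ mv_one.
Proof. apply oplus1. Qed.
Lemma zero_le x : mv_zero A ≤ x.
Proof. apply one_oplus. Qed.
Lemma le_zero x : x ≤ mv_zero A -> x = mv_zero A.
Proof. intro H. apply le_antisym; [exact H | apply zero_le]. Qed.

Lemma odot_le_r x y : x ⊙ y ≤ y.
Proof. unfold mv_le. rewrite st_odot, <- oplusA, compl_l. apply oplus1. Qed.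
Lemma odot_le_l x y : x ⊙ y ≤ x.
Proof. rewrite odotC. apply odot_le_r. Qed.

Lemma resid x y z : x ⊙ y ≤ z <-> x ≤ y^* ⊕ z.
Proof. unfold mv_le. rewrite st_odot, oplusA. tauto. Qed.

Lemma le_join_r x y : y ≤ x ⊔ y.
Proof. unfold mv_join. rewrite oplusC. apply le_add. Qed.
Lemma le_join_l x y : x ≤ x ⊔ y.
Proof. rewrite joinC. apply le_join_r. Qed.
Lemma join_lub x y z : x ≤ z -> y ≤ z -> x ⊔ y ≤ z.
Proof.
  intros H1 H2. rewrite (le_ex _ _ H2). unfold mv_join.
  rewrite (oplusC y (z ⊙ y^*)). apply oplus_mono, odot_mono, H1.
Qed.

Lemma meet_star x y : x ⊓ y = (y^* ⊔ x^*)^*.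
Proof.
  unfold mv_meet, mv_join, mv_odot. rewrite !stK.
  rewrite (oplusC y (x^*)), (oplusC (x^*) ((x^* ⊕ y)^*)). reflexivity.
Qed.
Lemma join_as_meet x y : x ⊔ y = (x^* ⊓ y^*)^*.
Proof. rewrite meet_star, !stK, joinC. reflexivity. Qed.

Lemma meetC x y : x ⊓ y = y ⊓ x.
Proof. rewrite !meet_star, joinC. reflexivity. Qed.
Lemma meet_le_l x y : x ⊓ y ≤ x.
Proof. apply odot_le_l. Qed.
Lemma meet_le_r x y : x ⊓ y ≤ y.
Proof. rewrite meetC. apply meet_le_l. Qed.
Lemma meet_glb x y z : z ≤ x -> z ≤ y -> z ≤ x ⊓ y.
Proof.
  intros H1 H2. rewrite meet_star. apply le_star_inv. rewrite stK.
  apply join_lub; apply le_star; assumption.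
Qed.

End NaturalOrder.

Section Distributivity.
Context {A : MVAlgebra}.
Implicit Types x y z p q : A.

Lemma odot_join x y z : x ⊙ (y ⊔ z) = (x ⊙ y) ⊔ (x ⊙ z).
Proof.
  apply le_antisym.
  - rewrite odotC. apply resid.
    apply join_lub; apply resid; rewrite odotC; [apply le_join_l | apply le_join_r].
  - apply join_lub; apply odot_mono_r; [apply le_join_l | apply le_join_r].
Qed.

Lemma oplus_absorbs_odot p q : p ⊕ q ⊕ (p ⊙ q) = p ⊕ q.
Proof.
  assert (Hsplit : (p^* ⊓ q) ⊕ (p ⊙ q) = q).
  { rewrite meetC. unfold mv_meet. rewrite (oplusC (q^*) (p^*)), <- st_odot.
    change (q ⊔ (p ⊙ q) = q). rewrite joinC. apply join_le, odot_le_r. }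
  assert (Habsorb : p ⊕ (p^* ⊓ q) = p ⊕ q).
  { unfold mv_meet. rewrite stK, oplusC, odotC.
    change ((p ⊕ q) ⊔ p = p ⊕ q). rewrite joinC. apply join_le, le_add. }
  rewrite <- Habsorb at 1. rewrite <- oplusA, Hsplit. reflexivity.
Qed.

Lemma prelinearity x y : (x^* ⊕ y) ⊔ (y^* ⊕ x) = mv_one.
Proof.
  assert (H : (x^* ⊕ y)^* ⊕ (y^* ⊕ x) ≤ y^* ⊕ x).
  { rewrite st_oplus, stK, (odotC x), oplusC, oplus_absorbs_odot. apply le_refl. }
  unfold mv_le in H. unfold mv_join, mv_odot. rewrite stK. exact H.
Qed.

(* The product distributes over meets: split 1 by prelinearity of y, z. *)
Lemma odot_meet x y z : x ⊙ (y ⊓ z) = (x ⊙ y) ⊓ (x ⊙ z).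
Proof.
  apply le_antisym.
  - apply meet_glb; apply odot_mono_r; [apply meet_le_l | apply meet_le_r].
  - set (m := (x ⊙ y) ⊓ (x ⊙ z)).
    rewrite <- (odot1 m), <- (prelinearity y z), odot_join.
    apply join_lub.
    + apply le_trans with ((x ⊙ y) ⊙ (y^* ⊕ z)).
      * apply odot_mono, meet_le_l.
      * rewrite <- odotA. apply le_refl.
    + apply le_trans with ((x ⊙ z) ⊙ (z^* ⊕ y)).
      * apply odot_mono, meet_le_r.
      * rewrite <- odotA, (meetC y z). apply le_refl.
Qed.

End Distributivity.

Section BooleanCenter.
Context {A : MVAlgebra}.
Implicit Types x a b c : A.

Lemma bool_join_compl b : boolean_center b -> b ⊔ b^* = mv_one.
Proof.
  intro Hb. assert (Hcompl : b^* ⊙ b^* = b^*) by (rewrite <- st_oplus, Hb; reflexivity).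
  rewrite joinC. unfold mv_join. rewrite Hcompl. apply compl_l.
Qed.

Lemma bool_odot b : boolean_center b -> b ⊙ b = b.
Proof.
  intro Hb. apply le_antisym; [apply odot_le_l|].
  pose proof (bool_join_compl _ Hb) as E. unfold mv_join in E.
  rewrite stK, oplusC in E. exact E.
Qed.

Lemma idem_star_bool c : c ⊙ c = c -> boolean_center (c^*).
Proof. intro H. unfold boolean_center. rewrite <- st_odot, H. reflexivity. Qed.

Lemma bool_star b : boolean_center b -> boolean_center (b^*).
Proof. intro Hb. apply idem_star_bool, bool_odot, Hb. Qed.

Lemma odot_idem_bool c : c ⊙ c = c -> boolean_center c.
Proof. intro H. rewrite <- (stK c). apply bool_star, idem_star_bool, H. Qed.

Lemma meet_bool x b : boolean_center b -> x ⊓ b = x ⊙ b.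
Proof.
  intro Hb. apply le_antisym.
  - rewrite <- (odot1 (x ⊓ b)), <- (bool_join_compl _ Hb), odot_join.
    apply join_lub.
    + apply odot_mono, meet_le_l.
    + apply le_trans with (b ⊙ b^*).
      * apply odot_mono, meet_le_r.
      * rewrite odot_compl. apply zero_le.
  - apply meet_glb; [apply odot_le_l | apply odot_le_r].
Qed.

Lemma bool_meet a b :
  boolean_center a -> boolean_center b -> boolean_center (a ⊓ b).
Proof.
  intros Ha Hb. rewrite (meet_bool _ _ Hb). apply odot_idem_bool.
  rewrite <- (bool_odot _ Ha) at 3. rewrite <- (bool_odot _ Hb) at 3.
  rewrite !odotA. f_equal. rewrite <- !odotA. f_equal. apply odotC.
Qed.

Lemma bool_join a b :
  boolean_center a -> boolean_center b -> boolean_center (a ⊔ b).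
Proof.
  intros Ha Hb. rewrite join_as_meet.
  apply bool_star, bool_meet; apply bool_star; assumption.
Qed.

End BooleanCenter.

Section Derivations.
Context {A : MVAlgebra}.
Implicit Types a b : A.

Lemma principal_der_join a b :
  fjoin (principal_der a) (principal_der b) = principal_der (a ⊔ b).
Proof.
  extensionality x. unfold fjoin, principal_der.
  rewrite !(odotC _ x). symmetry. apply odot_join.
Qed.

Lemma principal_der_meet a b :
  fmeet (principal_der a) (principal_der b) = principal_der (a ⊓ b).
Proof.
  extensionality x. unfold fmeet, principal_der.
  rewrite !(odotC _ x). symmetry. apply odot_meet.
Qed.

(* d_a determines a, since d_a 1 = a. *)
Lemma principal_der_inj a b : principal_der a = principal_der b -> a = b.
Proof.
  intro H. apply (f_equal (fun f => f mv_one)) in H.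
  unfold principal_der in H. rewrite !odot1 in H. exact H.
Qed.

(* For Boolean b, d_b is an isotone derivation (b (.) b = b gives the rule). *)
Lemma principal_der_IDer b : boolean_center b -> IDer (principal_der b).
Proof.
  intro Hb. unfold IDer, principal_der. split; [|split].
  - intros x y. rewrite odotA, (odotA x b y), (odotC x b). symmetry. apply join_idem.
  - intros x y Hxy. apply odot_mono_r, Hxy.
  - rewrite odot1. exact Hb.
Qed.

Lemma derivation_bounds {d : A -> A} : odot_join_derivation d ->
  forall x, x ⊙ d mv_one ≤ d x /\ d x ≤ x.
Proof.
  intros Hd x.
  assert (Hzero : d (mv_zero A) = mv_zero A).
  { pose proof (Hd (mv_zero A) (mv_zero A)) as H.
    rewrite !odot0, !zero_odot in H. rewrite H. apply join_idem. }
  split.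
  - pose proof (Hd x mv_one) as H. rewrite !odot1 in H. rewrite H. apply le_join_r.
  - apply le_iff0, le_zero. pose proof (Hd x (x^*)) as H.
    rewrite odot_compl, Hzero in H. rewrite H. apply le_join_l.
Qed.

(* Every d in IDer(A) is the principal derivation d_(d 1):
   d x <= x ^ d 1 = x (.) d 1 <= d x. *)
Lemma IDer_principal {d : A -> A} : IDer d -> d = principal_der (d mv_one).
Proof.
  intros [Hd [Hiso Hbool]]. extensionality x. unfold principal_der.
  destruct (derivation_bounds Hd x) as [Hlower Hupper].
  rewrite odotC. apply le_antisym; [|exact Hlower].
  rewrite <- (meet_bool _ _ Hbool). apply meet_glb; [exact Hupper|].
  apply Hiso, le_one.
Qed.

Lemma IDer_join_meet (d1 d2 : A -> A) : IDer d1 -> IDer d2 ->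
  IDer (fjoin d1 d2) /\ IDer (fmeet d1 d2).
Proof.
  intros H1 H2.
  pose proof (proj2 (proj2 H1)) as B1. pose proof (proj2 (proj2 H2)) as B2.
  rewrite (IDer_principal H1), (IDer_principal H2),
    principal_der_join, principal_der_meet.
  split; apply principal_der_IDer; [apply bool_join | apply bool_meet]; assumption.
Qed.

End Derivations.

Theorem proposition5p11 (A : MVAlgebra) :
  (* closure of PDer(A) and IDer(A) under pointwise join and meet *)
  (forall d1 d2 : A -> A, PDer d1 -> PDer d2 -> PDer (fjoin d1 d2) /\ PDer (fmeet d1 d2)) /\
  (forall d1 d2 : A -> A, IDer d1 -> IDer d2 -> IDer (fjoin d1 d2) /\ IDer (fmeet d1 d2)) /\
  (* (1) d_a |-> a is a lattice isomorphism PDer(A) -> (A, join, meet):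
     well defined / injective, surjective, and preserves join and meet *)
  ((forall a b : A, principal_der a = principal_der b -> a = b) /\
   (forall a b : A, fjoin (principal_der a) (principal_der b) = principal_der (mv_join a b)) /\
   (forall a b : A, fmeet (principal_der a) (principal_der b) = principal_der (mv_meet a b))) /\
  (* (2) d |-> d(1) is a lattice isomorphism IDer(A) -> (B(A), join, meet) *)
  ((forall d : A -> A, IDer d -> boolean_center (d mv_one)) /\
   (forall d1 d2 : A -> A, IDer d1 -> IDer d2 -> d1 mv_one = d2 mv_one -> d1 = d2) /\
   (forall b : A, boolean_center b -> exists d : A -> A, IDer d /\ d mv_one = b) /\
   (forall d1 d2 : A -> A, IDer d1 -> IDer d2 ->
      fjoin d1 d2 mv_one = mv_join (d1 mv_one) (d2 mv_one) /\
      fmeet d1 d2 mv_one = mv_meet (d1 mv_one) (d2 mv_one))).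
Proof.
  split; [|split; [|split]].
  - intros d1 d2 [a ->] [b ->].
    split; [exists (a ⊔ b); apply principal_der_join
           | exists (a ⊓ b); apply principal_der_meet].
  - exact IDer_join_meet.
  - split; [exact principal_der_inj | split; [exact principal_der_join
                                             | exact principal_der_meet]].
  - split; [|split; [|split]].
    + intros d Hd. exact (proj2 (proj2 Hd)).
    + intros d1 d2 H1 H2 E.
      rewrite (IDer_principal H1), (IDer_principal H2), E. reflexivity.
    + intros b Hb. exists (principal_der b).
      split; [exact (principal_der_IDer _ Hb) | apply odot1].
    + intros d1 d2 _ _. split; reflexivity.
Qed.
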